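(* Let $n_x,n_y\ge1$, $n=n_x+n_y+1$, and let $\mathcal{F}\subseteq\mathbb{R}^{n_x+n_y}$ be nonempty and compact. Let $f$ be a quadratic function of $(\mathbf{x},\mathbf{y})\in\mathbb{R}^{n_x}\times\mathbb{R}^{n_y}$ and $\mathbf{Q}\in\mathcal{S}^n$ with $\mathbf{Q}\bullet\mathbf{z}\mathbf{z}^\top=f(\mathbf{x},\mathbf{y})$ for $\mathbf{z}=[1,\mathbf{x}^\top,\mathbf{y}^\top]^\top$; write $q(\mathbf{P})=\mathbf{Q}\bullet\mathbf{P}$. Let $\phi(\mathbf{x})=\inf_{\mathbf{y}}\{f(\mathbf{x},\mathbf{y}):[\mathbf{x}^\top,\mathbf{y}^\top]^\top\in\mathcal{F}\}$ (with $\inf\emptyset=+\infty$). For $\mathbf{x}\in\mathbb{R}^{n_x}$ define $$\mathcal{G}_1(\mathbf{x})=\{\mathbf{P}\in\mathcal{G}(\mathcal{F}) : \text{the }\mathbf{x}\text{-block of }\mathbf{P}\text{ equals }\mathbf{x},\ \text{the }\mathbf{X}\text{-block of }\mathbf{P}\text{ equals }\mathbf{x}\mathbf{x}^\top\},$$ $$\mathcal{G}_2(\mathbf{x})=\{\mathbf{P}\in\mathcal{G}(\mathcal{F}) : \text{the }\mathbf{x}\text{-block equals }\mathbf{x},\ \text{the }\mathbf{X}\text{-block equals }\mathbf{x}\mathbf{x}^\top,\ \text{the }\mathbf{Z}\text{-block equals }\mathbf{y}_{\mathbf{P}}\mathbf{x}^\top\},$$ where $\mathbf{y}_{\mathbf{P}}$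 is the $\mathbf{y}$-block of $\mathbf{P}$. Then $\phi(\mathbf{x})=\inf_{\mathbf{P}}\{q(\mathbf{P}):\mathbf{P}\in\mathcal{G}_j(\mathbf{x})\}$ for $j=1,2$ and all $\mathbf{x}\in\mathbb{R}^{n_x}$. Moreover $\mathcal{G}_1(\mathbf{x})=\mathcal{G}_2(\mathbf{x})$, and both sets remain unchanged if the constraint that the $\mathbf{X}$-block equals $\mathbf{x}\mathbf{x}^\top$ is relaxed to $\operatorname{diag}(\mathbf{X})=\mathbf{x}\circ\mathbf{x}$ (entrywise product).
   Context: $\mathcal{S}^n$ is the space of symmetric $n\times n$ matrices and $\mathbf{A}\bullet\mathbf{B}=\operatorname{tr}(\mathbf{A}^\top\mathbf{B})$. $\mathcal{G}(\mathcal{F})=\operatorname{cl}\operatorname{conv}\{\mathbf{z}\mathbf{z}^\top:\mathbf{z}=[1,\mathbf{x}^\top,\mathbf{y}^\top]^\top,\ [\mathbf{x}^\top,\mathbf{y}^\top]^\top\in\mathcal{F}\}$. Every $\mathbf{P}\in\mathcal{S}^n$ is partitioned as $\mathbf{P}=\begin{pmatrix}x_0&\mathbf{x}^\top&\mathbf{y}^\top\\ \mathbf{x}&\mathbf{X}&\mathbf{Z}^\top\\ \mathbf{y}&\mathbf{Z}&\mathbf{Y}\end{pmatrix}$ with $\mathbf{x}\in\mathbb{R}^{n_x}$, $\mathbf{y}\in\mathbb{R}^{n_y}$, $\mathbf{X}\in\mathcal{S}^{n_x}$, $\mathbf{Z}\in\mathbb{R}^{n_y\times n_x}$, $\mathbf{Y}\in\mathcal{S}^{n_y}$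 (these are the ''blocks'' referred to). The infimum over an empty set is $+\infty$. *)

From HB Require Import structures.
From mathcomp Require Import all_boot all_order all_algebra.
From mathcomp Require Import all_classical all_reals topology ereal normedtype.
Import numFieldNormedType.Exports.
Set Implicit Arguments. Unset Strict Implicit. Unset Printing Implicit Defensive.
Import Order.TTheory GRing.Theory Num.Theory.
Local Open Scope ring_scope.
Local Open Scope classical_set_scope.

Section Defs.
Variables (R : realType) (nx ny : nat).

Notation N := (1 + (nx + ny))%N.

Definition frob {m : nat} (A B : 'M[R]_m) : R := \tr (A^T *m B).

Definition zvec (x : 'cV[R]_nx) (y : 'cV[R]_ny) : 'cV[R]_N :=
  col_mx (1 : 'cV[R]_1) (col_mx x y).

Definition conv_hull {m : nat} (S : set 'M[R]_m) : set 'M[R]_m :=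
  [set P | exists (k : nat) (lam : 'I_k -> R) (A : 'I_k -> 'M[R]_m),
     (forall i, 0 <= lam i) /\ \sum_(i < k) lam i = 1 /\
     (forall i, S (A i)) /\ P = \sum_(i < k) lam i *: A i].

Definition GF (F : set 'cV[R]_(nx + ny)) : set 'M[R]_N :=
  closure (conv_hull [set P | exists (x : 'cV[R]_nx) (y : 'cV[R]_ny),
                         F (col_mx x y) /\ P = zvec x y *m (zvec x y)^T]).

(* blocks of P = [x0 x^T y^T; x X Z^T; y Z Y] *)
Definition xblk (P : 'M[R]_N) : 'cV[R]_nx := usubmx (dlsubmx P).
Definition yblk (P : 'M[R]_N) : 'cV[R]_ny := dsubmx (dlsubmx P).
Definition Xblk (P : 'M[R]_N) : 'M[R]_nx := ulsubmx (drsubmx P).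
Definition Zblk (P : 'M[R]_N) : 'M[R]_(ny, nx) := dlsubmx (drsubmx P).

Definition G1 F (x : 'cV[R]_nx) : set 'M[R]_N :=
  [set P | GF F P /\ xblk P = x /\ Xblk P = x *m x^T].
Definition G2 F (x : 'cV[R]_nx) : set 'M[R]_N :=
  [set P | GF F P /\ xblk P = x /\ Xblk P = x *m x^T /\ Zblk P = yblk P *m x^T].
Definition G1d F (x : 'cV[R]_nx) : set 'M[R]_N :=
  [set P | GF F P /\ xblk P = x /\ (forall i, Xblk P i i = x i 0 * x i 0)].
Definition G2d F (x : 'cV[R]_nx) : set 'M[R]_N :=
  [set P | GF F P /\ xblk P = x /\ (forall i, Xblk P i i = x i 0 * x i 0)
           /\ Zblk P = yblk P *m x^T].

Definition phi F (f : 'cV[R]_nx -> 'cV[R]_ny -> R) (x : 'cV[R]_nx) : \bar R :=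
  ereal_inf [set (f x y)%:E | y in [set y | F (col_mx x y)]].

Definition qinf (Q : 'M[R]_N) (G : set 'M[R]_N) : \bar R :=
  ereal_inf [set (frob Q P)%:E | P in G].

End Defs.

From HB Require Import structures.
From mathcomp Require Import all_boot all_order all_algebra.
From mathcomp Require Import all_classical all_reals topology ereal normedtype.
From mathcomp Require Import ring lra.
Import numFieldNormedType.Exports.
Import Order.TTheory GRing.Theory Num.Theory.
Local Open Scope ring_scope.
Local Open Scope classical_set_scope.
Set Implicit Arguments. Unset Strict Implicit. Unset Printing Implicit Defensive.

(* Every linear functional [P |-> C • P] that is bounded below on the generators
   [z z^T] of G(F) stays bounded below on their closed convex hull. Hence every P in
   G(F) is symmetric, positive semidefinite and has [P_00 = 1]. If moreover the
   x-block of P is x and diag(X) = x o x, then [u_i = e_(x_i) - x_i e_0] satisfies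
   [u_i^T P u_i = 0], so [P u_i = 0], i.e. [P_(b, x_i) = x_i P_(b, 0)] for every
   row b; this gives [X = x x^T] and [Z = y_P x^T], so the four sets coincide.
   For [phi(x) <= Q • P] on G_1(x), penalise the distance of the x-part of w from x:
   by compactness, for every [r < phi(x)] there is t with
   [r < f(w) + t sum_i (w_i - x_i)^2] on F. The right-hand side is [C • z z^T] for a
   fixed matrix C, and its penalty part vanishes on G_1(x). The converse inequality
   holds because [z z^T] lies in G_1(x) whenever [(x, y)] lies in F. *)

Lemma continuous_sum (R : realType) (T : topologicalType) (I : finType)
    (f : I -> T -> R) :
  (forall i, continuous (f i)) -> continuous (fun t => \sum_i f i t).
Proof.
move=> cf; rewrite -fct_sumE; apply: (big_ind (fun g : T -> R => continuous g)).
- by move=> t; exact: cst_continuous.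
- by move=> g h cg ch t; apply: continuousD; [exact: cg | exact: ch].
- by move=> i _; exact: cf.
Qed.

Section Frobenius.
Variables (R : realType) (m : nat).
Implicit Types (A C P : 'M[R]_m).

Lemma frobE C P : frob C P = \sum_i \sum_j C i j * P i j.
Proof.
rewrite /frob /mxtrace exchange_big; apply: eq_bigr => j _.
by rewrite mxE; apply: eq_bigr => i _; rewrite mxE.
Qed.

Lemma continuous_frob C : continuous (frob C).
Proof.
rewrite (_ : frob C = fun P => \sum_i \sum_j C i j * P i j); last first.
  by apply: funext => P; rewrite frobE.
apply: continuous_sum => i; apply: continuous_sum => j P.
by apply: continuousM; [exact: cst_continuous | exact: coord_continuous].
Qed.

Lemma frobDl A C P : frob (A + C) P = frob A P + frob C P.
Proof. by rewrite /frob linearD /= mulmxDl mxtraceD. Qed.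

Lemma frobZl a C P : frob (a *: C) P = a * frob C P.
Proof. by rewrite /frob linearZ /= -scalemxAl mxtraceZ. Qed.

Lemma frobNl C P : frob (- C) P = - frob C P.
Proof. by rewrite -scaleN1r frobZl mulN1r. Qed.

Lemma frob_suml (I : finType) (Cs : I -> 'M[R]_m) P :
  frob (\sum_i Cs i) P = \sum_i frob (Cs i) P.
Proof. by rewrite /frob raddf_sum mulmx_suml raddf_sum. Qed.

Lemma frob_combr C k (lam : 'I_k -> R) (A : 'I_k -> 'M[R]_m) :
  frob C (\sum_i lam i *: A i) = \sum_i lam i * frob C (A i).
Proof.
rewrite /frob mulmx_sumr linear_sum; apply: eq_bigr => i _.
by rewrite -scalemxAr linearZ.
Qed.

Lemma frob_delta i j P : frob (delta_mx i j) P = P i j.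
Proof.
rewrite frobE (bigD1 i) //= [X in _ + X]big1 ?addr0 => [|k ki]; last first.
  by apply: big1 => l _; rewrite mxE (negbTE ki) mul0r.
rewrite (bigD1 j) //= [X in _ + X]big1 ?addr0 => [|l lj]; last first.
  by rewrite mxE (negbTE lj) andbF mul0r.
by rewrite mxE !eqxx mul1r.
Qed.

Lemma closure_conv_hull_frob_ge (S : set 'M[R]_m) C c :
  (forall A, S A -> c <= frob C A) ->
  forall P, closure (conv_hull S) P -> c <= frob C P.
Proof.
move=> SC; have half_closed : closed (frob C @^-1` [set r | c <= r]).
  by apply: preimage_closed => [P _|]; [exact: continuous_frob | exact: closed_ge].
have : conv_hull S `<=` frob C @^-1` [set r | c <= r].
  move=> _ [k [lam [A [lam_ge0 [lam_sum1 [SA ->]]]]]] /=.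
  rewrite frob_combr -[c]mul1r -lam_sum1 mulr_suml; apply: ler_sum => i _.
  exact: (ler_wpM2l (lam_ge0 i) (SC _ (SA i))).
by move=> /closureS + P => /[apply]; rewrite -(closure_id _).1.
Qed.

Lemma closure_conv_hull_frob_eq (S : set 'M[R]_m) C c :
  (forall A, S A -> frob C A = c) ->
  forall P, closure (conv_hull S) P -> frob C P = c.
Proof.
move=> SC P hP; apply/eqP; rewrite eq_le.
rewrite (closure_conv_hull_frob_ge (C := C) _ hP) => [|A /SC ->] //.
rewrite andbT -lerN2 -frobNl.
by apply: (closure_conv_hull_frob_ge _ hP) => A SA; rewrite frobNl SC.
Qed.

End Frobenius.

Lemma quad_ge0_lin_eq0 (R : realFieldType) (a c : R) :
  (forall t, 0 <= t * a + t ^+ 2 * c) -> a = 0.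
Proof.
move=> h; have h1 := h 1; have h2 := h (-1); rewrite !expr2 in h1 h2.
have [c0|c_neq0] := eqVneq c 0; first by rewrite c0 in h1 h2; lra.
have c_pos : 0 < c by lra.
have := h (- a / (2 * c)); rewrite expr2.
have -> : - a / (2 * c) * a + - a / (2 * c) * (- a / (2 * c)) * c = - (a ^+ 2 / (4 * c)).
  by field; rewrite c_neq0.
rewrite oppr_ge0 pmulr_lle0 ?invr_gt0 ?mulr_gt0 // => a2_le0.
by apply/eqP; rewrite -sqrf_eq0 eq_le a2_le0 sqr_ge0.
Qed.

Section QuadraticForm.
Variables (R : realType) (m : nat).
Implicit Types (P : 'M[R]_m) (u v w z : 'cV[R]_m) (a b r : 'I_m) (c : R).

Definition qform P v : R := (v^T *m P *m v) 0 0.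

Lemma outerE z a b : (z *m z^T) a b = z a 0 * z b 0.
Proof. by rewrite !mxE big_ord1 !mxE. Qed.

Lemma frob_outer v P : frob (v *m v^T) P = qform P v.
Proof.
rewrite /frob /qform trmx_mul trmxK -[in LHS]mulmxA mxtrace_mulC.
by rewrite /mxtrace big_ord1.
Qed.

Lemma qform_outer z v : qform (z *m z^T) v = ((v^T *m z) 0 0) ^+ 2.
Proof.
rewrite /qform mulmxA -mulmxA -[z^T *m v]trmxK trmx_mul trmxK.
by rewrite mxE big_ord1 [X in _ * X]mxE expr2.
Qed.

Lemma qform_add_scale P u w t : P^T = P ->
  qform P (u + t *: w) = qform P u + t * (2 * (w^T *m P *m u) 0 0) + t ^+ 2 * qform P w.
Proof.
move=> Psym; have cross : (u^T *m P *m w) 0 0 = (w^T *m P *m u) 0 0.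
  have -> : (u^T *m P *m w) 0 0 = (u^T *m P *m w)^T 0 0 by rewrite [RHS]mxE.
  by rewrite !trmx_mul trmxK Psym mulmxA.
rewrite /qform !linearD !linearZ /= !mulmxDl -!scalemxAl; move: cross.
set uu := u^T *m P *m u; set uw := u^T *m P *m w; set wu := w^T *m P *m u.
by set ww := w^T *m P *m w; rewrite !mxE => ->; ring.
Qed.

Lemma sym_psd_mulmx_eq0 P u : P^T = P -> (forall v, 0 <= qform P v) ->
  qform P u = 0 -> P *m u = 0.
Proof.
move=> Psym Ppsd Pu0; apply/colP => b; rewrite [RHS]mxE.
pose e_b : 'cV[R]_m := delta_mx b 0.
have Pu_b : (e_b^T *m P *m u) 0 0 = (P *m u) b 0.
  by rewrite trmx_delta -mulmxA -rowE mxE.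
suff : 2 * (P *m u) b 0 = 0 by lra.
apply: (quad_ge0_lin_eq0 (c := qform P e_b)) => t.
by rewrite -Pu_b; have := Ppsd (u + t *: e_b); rewrite qform_add_scale // Pu0 add0r.
Qed.

Definition ediff a b c : 'cV[R]_m := delta_mx a 0 - c *: delta_mx b 0.

Lemma ediff_dot a b c z : ((ediff a b c)^T *m z) 0 0 = z a 0 - c * z b 0.
Proof.
rewrite /ediff linearB linearZ /= !trmx_delta mulmxBl -scalemxAl.
by rewrite -!rowE !mxE.
Qed.

Lemma mulmx_ediff P a b c r : (P *m ediff a b c) r 0 = P r a - c * P r b.
Proof. by rewrite /ediff mulmxBr -scalemxAr -!colE !mxE. Qed.

Lemma qform_ediff P a b c :
  qform P (ediff a b c) = P a a - c * (P a b + P b a) + c ^+ 2 * P b b.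
Proof. by rewrite /qform -mulmxA ediff_dot !mulmx_ediff; ring. Qed.

End QuadraticForm.

Section Penalty.
Variables (R : realType) (T : topologicalType) (g d : T -> R) (m : R).
Hypotheses (g_cont : continuous g) (d_cont : continuous d) (d_ge0 : forall w, 0 <= d w).

Lemma penalty_near w : (d w = 0 -> m < g w) ->
  \forall w' \near w & t \near (+oo : set_system R), m < g w' + t * d w'.
Proof.
move=> gw; have [dw0|dw_neq0] := eqVneq (d w) 0.
  exists ([set w' | m < g w'], [set t : R | 0 < t]).
    by split; [exact: (cvgr_gt _ (@g_cont w) _ (gw dw0)) | exact: nbhs_pinfty_gt].
  move=> [w' t] [/= mg t_gt0].
  by have := mulr_ge0 (ltW t_gt0) (d_ge0 w'); lra.
have dw_gt0 : 0 < d w by rewrite lt_def dw_neq0 d_ge0.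
pose t0 := 2 * (`|m - g w| + 1) / d w.
exists ([set w' | d w / 2 < d w'] `&` [set w' | g w - 1 < g w'], [set t | t0 < t]).
  split; last exact: (nbhs_pinfty_gt (num_real t0)).
  apply: filterI; first by apply: (cvgr_gt _ (@d_cont w)); lra.
  by apply: (cvgr_gt _ (@g_cont w)); lra.
move=> [w' t] [[/= dw' gw'] /= t0_lt].
have t0_half : t0 * (d w / 2) = `|m - g w| + 1 by rewrite /t0; field; rewrite gt_eqF.
have t_gt0 : 0 < t by apply: le_lt_trans t0_lt; rewrite /t0 divr_ge0 ?ltW // mulr_ge0 //; lra.
have : t0 * (d w / 2) < t * d w'.
  apply: (lt_le_trans (y := t * (d w / 2))); first by rewrite ltr_pM2r //; lra.
  by rewrite ler_pM2l //; lra.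
by have := ler_norm (m - g w); lra.
Qed.

Lemma compact_penalty (K : set T) : compact K ->
  (forall w, K w -> d w = 0 -> m < g w) ->
  exists t, forall w, K w -> m < g w + t * d w.
Proof.
move=> K_compact Kg.
have /pinfty_ex_gt0[t _ ht] : \forall t \near (+oo : set_system R),
    K `<=` (fun w => m < g w + t * d w).
  apply: ((compact_near_coveringP K).1 K_compact) => w Kw.
  exact: (penalty_near (Kg w Kw)).
by exists t.
Qed.

End Penalty.

Lemma ereal_le_fin_ub (R : realType) (a : \bar R) (b : R) :
  (forall r : R, (r%:E < a)%E -> r <= b) -> (a <= b%:E)%E.
Proof.
case: a => [a | | ] ub; last by rewrite leNye.
- rewrite lee_fin leNgt; apply/negP => b_lt_a.
  by have := ub ((a + b) / 2); rewrite lte_fin; lra.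
- by have := ub (b + 1)%R (ltry _); rewrite gerDl ler10.
Qed.

Section Lifting.
Variables (R : realType) (nx ny : nat).
Local Notation N := (1 + (nx + ny))%N.
Implicit Types (F : set 'cV[R]_(nx + ny)) (P C : 'M[R]_N) (x : 'cV[R]_nx)
  (w : 'cV[R]_(nx + ny)).

Definition i0 : 'I_N := lshift (nx + ny) ord0.
Definition ix (i : 'I_nx) : 'I_N := rshift 1 (lshift ny i).
Definition iy (k : 'I_ny) : 'I_N := rshift 1 (rshift nx k).

Lemma xblkE P i : xblk P i 0 = P (ix i) i0.
Proof. by rewrite !mxE. Qed.

Lemma yblkE P k : yblk P k 0 = P (iy k) i0.
Proof. by rewrite !mxE. Qed.

Lemma XblkE P i j : Xblk P i j = P (ix i) (ix j).
Proof. by rewrite !mxE. Qed.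

Lemma ZblkE P k i : Zblk P k i = P (iy k) (ix i).
Proof. by rewrite !mxE. Qed.

Definition zcol w : 'cV[R]_N := col_mx 1 w.

Lemma zcol_i0 w : zcol w i0 0 = 1.
Proof. by rewrite col_mxEu mxE. Qed.

Lemma zcol_ix w i : zcol w (ix i) 0 = w (lshift ny i) 0.
Proof. by rewrite col_mxEd. Qed.

Lemma continuous_zcol b : continuous (fun w => zcol w b 0).
Proof.
rewrite -(splitK b); case: (fintype.split b) => [j | k] /=.
- have -> : (fun w => zcol w (lshift _ j) 0) = fun=> (1 : 'cV[R]_1) j 0.
    by apply/funext => w; rewrite col_mxEu.
  by move=> w; exact: cst_continuous.
- have -> : (fun w => zcol w (rshift 1 k) 0) = fun w => w k 0.
    by apply/funext => w; rewrite col_mxEd.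
  exact: coord_continuous.
Qed.

Lemma continuous_frob_zcol C :
  continuous (fun w => frob C (zcol w *m (zcol w)^T)).
Proof.
rewrite (_ : (fun w => _) = fun w => \sum_a \sum_b C a b * (zcol w a 0 * zcol w b 0)).
  apply: continuous_sum => a; apply: continuous_sum => b w.
  apply: (@continuousM R _ (fun=> C a b) (fun w => zcol w a 0 * zcol w b 0)).
    exact: cst_continuous.
  by apply: (@continuousM R _ (fun w => zcol w a 0) (fun w => zcol w b 0));
    exact: continuous_zcol.
apply/funext => w; rewrite frobE; apply: eq_bigr => a _.
by apply: eq_bigr => b _; rewrite outerE.
Qed.

Lemma GF_frob_ge F C c :
  (forall w, F w -> c <= frob C (zcol w *m (zcol w)^T)) ->
  forall P, GF F P -> c <= frob C P.
Proof. by move=> FC; apply: closure_conv_hull_frob_ge => _ [x [y [Fxy ->]]]; exact: FC. Qed.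

Lemma GF_frob_eq F C c :
  (forall w, F w -> frob C (zcol w *m (zcol w)^T) = c) ->
  forall P, GF F P -> frob C P = c.
Proof. by move=> FC; apply: closure_conv_hull_frob_eq => _ [x [y [Fxy ->]]]; exact: FC. Qed.

Lemma GF_corner F P : GF F P -> P i0 i0 = 1.
Proof.
rewrite -frob_delta; apply: GF_frob_eq => w _.
by rewrite frob_delta outerE zcol_i0 mulr1.
Qed.

Lemma GF_sym F P : GF F P -> P^T = P.
Proof.
move=> GFP; apply/matrixP => a b; rewrite mxE; apply/eqP; rewrite -subr_eq0.
rewrite -!frob_delta -frobNl -frobDl; apply/eqP; move: GFP; apply: GF_frob_eq => w _.
by rewrite frobDl frobNl !frob_delta !outerE mulrC subrr.
Qed.

Lemma GF_psd F P v : GF F P -> 0 <= qform P v.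
Proof.
rewrite -frob_outer; apply: GF_frob_ge => w _.
by rewrite frob_outer qform_outer sqr_ge0.
Qed.

Lemma GF_qform_ediff_ix F P x i : GF F P -> xblk P = x ->
  Xblk P i i = x i 0 * x i 0 -> qform P (ediff (ix i) i0 (x i 0)) = 0.
Proof.
move=> GFP Px PX; have Pi0 : P (ix i) i0 = x i 0 by rewrite -xblkE Px.
have P0i : P i0 (ix i) = x i 0 by rewrite -[P](GF_sym GFP) mxE.
by rewrite qform_ediff -XblkE PX Pi0 P0i (GF_corner GFP); ring.
Qed.

Lemma GF_col_ix F P x : GF F P -> xblk P = x ->
  (forall i, Xblk P i i = x i 0 * x i 0) ->
  forall b i, P b (ix i) = x i 0 * P b i0.
Proof.
move=> GFP Px PX b i; apply/eqP; rewrite -subr_eq0 -(mulmx_ediff P).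
have Pdev0 : P *m ediff (ix i) i0 (x i 0) = 0.
  apply: sym_psd_mulmx_eq0 (GF_sym GFP) (fun v => GF_psd v GFP) _.
  exact: GF_qform_ediff_ix GFP Px (PX i).
by rewrite Pdev0 mxE.
Qed.

Lemma G1d_sub_G2 F x : G1d F x `<=` G2 F x.
Proof.
move=> P [GFP [Px PX]]; split => //; split => //; split; apply/matrixP => a b.
  by rewrite XblkE (GF_col_ix GFP Px PX) -xblkE Px outerE mulrC.
by rewrite ZblkE (GF_col_ix GFP Px PX) -yblkE !mxE big_ord1 !mxE mulrC.
Qed.

Lemma zvec_outer_G1 F x y : F (col_mx x y) -> G1 F x (zvec x y *m (zvec x y)^T).
Proof.
move=> Fxy; split; [|split].
- apply: subset_closure; exists 1%N, (fun=> 1), (fun=> zvec x y *m (zvec x y)^T).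
  rewrite !big_ord1 scale1r; split; first by move=> _; exact: ler01.
  by do !split => //; exists x, y.
- by apply/colP => i; rewrite xblkE outerE zcol_ix zcol_i0 col_mxEu mulr1.
- by apply/matrixP => i j; rewrite XblkE !outerE !zcol_ix !col_mxEu.
Qed.

Lemma phi_le_frob F f Q x P : compact F ->
  (forall x y, frob Q (zvec x y *m (zvec x y)^T) = f x y) ->
  G1 F x P -> (phi F f x <= (frob Q P)%:E)%E.
Proof.
move=> F_compact Qf [GFP [Px PX]]; apply: ereal_le_fin_ub => r r_lt_phi.
pose D := \sum_i ediff (ix i) i0 (x i 0) *m (ediff (ix i) i0 (x i 0))^T.
have D_outer w : frob D (zcol w *m (zcol w)^T) = \sum_i (w (lshift ny i) 0 - x i 0) ^+ 2.
  rewrite frob_suml; apply: eq_bigr => i _.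
  by rewrite frob_outer qform_outer ediff_dot zcol_ix zcol_i0 mulr1.
have D_ge0 w : 0 <= frob D (zcol w *m (zcol w)^T).
  by rewrite D_outer; apply: sumr_ge0 => i _; exact: sqr_ge0.
have Q_gt w : F w -> frob D (zcol w *m (zcol w)^T) = 0 ->
    r < frob Q (zcol w *m (zcol w)^T).
  move=> Fw; rewrite D_outer => /psumr_eq0P w_x.
  have wx : usubmx w = x.
    apply/colP => i; rewrite mxE; apply/eqP; rewrite -subr_eq0 -sqrf_eq0.
    by rewrite w_x // => j _; exact: sqr_ge0.
  rewrite -[w]vsubmxK wx in Fw *; rewrite Qf -lte_fin.
  by apply: lt_le_trans r_lt_phi _; apply: ereal_inf_lbound; exists (dsubmx w).
have [t penalty] := compact_penalty (continuous_frob_zcol (C := Q))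
  (continuous_frob_zcol (C := D)) D_ge0 F_compact Q_gt.
have : r <= frob (Q + t *: D) P.
  by apply: GF_frob_ge GFP => w Fw; rewrite frobDl frobZl; exact/ltW/penalty.
rewrite frobDl frobZl frob_suml big1 ?mulr0 ?addr0 // => i _.
by rewrite frob_outer (GF_qform_ediff_ix GFP Px) // PX outerE.
Qed.

Lemma phi_eq_qinf_G1 F f Q x : compact F ->
  (forall x y, frob Q (zvec x y *m (zvec x y)^T) = f x y) ->
  phi F f x = qinf Q (G1 F x).
Proof.
move=> F_compact Qf; apply/eqP; rewrite eq_le; apply/andP; split.
  by apply: le_ereal_inf_tmp => _ [P G1P <-]; exact: phi_le_frob.
apply: ereal_inf_le_tmp => _ [y Fy <-].
by exists (zvec x y *m (zvec x y)^T); [exact: zvec_outer_G1 | rewrite Qf].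
Qed.

End Lifting.

Theorem theorem3 (R : realType) (nx ny : nat) (hnx : (1 <= nx)%N) (hny : (1 <= ny)%N)
  (F : set 'cV[R]_(nx + ny)) (hFne : F !=set0) (hFc : compact F)
  (f : 'cV[R]_nx -> 'cV[R]_ny -> R) (Q : 'M[R]_(1 + (nx + ny)))
  (hQsym : Q^T = Q)
  (hQf : forall x y, frob Q (zvec x y *m (zvec x y)^T) = f x y) :
  forall x : 'cV[R]_nx,
    phi F f x = qinf Q (G1 F x) /\
    phi F f x = qinf Q (G2 F x) /\
    G1 F x = G2 F x /\
    G1d F x = G1 F x /\
    G2d F x = G2 F x.
Proof.
move=> x.
have G1_sub_G1d : G1 F x `<=` G1d F x.
  by move=> P [GFP [Px PX]]; split=> //; split=> // i; rewrite PX outerE.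
have G2_sub_G2d : G2 F x `<=` G2d F x.
  by move=> P [GFP [Px [PX PZ]]]; do 2!split=> //; split=> // i; rewrite PX outerE.
have G2_sub_G1 : G2 F x `<=` G1 F x by move=> P [GFP [Px [PX _]]].
have G2d_sub_G1d : G2d F x `<=` G1d F x by move=> P [GFP [Px [PX _]]].
have G1d_sub_G2 := @G1d_sub_G2 R nx ny F x.
have G1_G2 : G1 F x = G2 F x by apply/seteqP; split=> // P /G1_sub_G1d /G1d_sub_G2.
have G1d_G1 : G1d F x = G1 F x by apply/seteqP; split=> // P /G1d_sub_G2 /G2_sub_G1.
have G2d_G2 : G2d F x = G2 F x by apply/seteqP; split=> // P /G2d_sub_G1d /G1d_sub_G2.
by rewrite G2d_G2 G1d_G1 -G1_G2 -(phi_eq_qinf_G1 x hFc hQf).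
Qed.
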